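(* Let $q_0,\dots,q_{T-1}\in\mathcal S^{d-1}$ be a fixed sequence of recommendations spanning $\mathbb{R}^d$, and let step sizes be either constant $\eta_t=\eta$ or decreasing $\eta_t=\frac{\eta}{t+s}$. Define $\Phi_0=I$, $\Phi_{t+1}=(I+\eta_tq_tq_t^\top)\Phi_t$, and $F_T:\mathcal S^{d-1}\to\mathbb{R}^T$ by \[F_T(p_0)=\left(\frac{q_0^\top\Phi_0p_0}{\|\Phi_0p_0\|},\dots,\frac{q_{T-1}^\top\Phi_{T-1}p_0}{\|\Phi_{T-1}p_0\|}\right),\] which is the sequence of affinities $y_t=q_t^\top p_t$ generated by the dynamics $\tilde p_{t+1}=p_t+\eta_t(p_t^\top q_t)q_t$, $p_{t+1}=\tilde p_{t+1}/\|\tilde p_{t+1}\|_2$ from initial preference $p_0$. Then $F_T$ is locally invertible around every $p_0\in\mathcal S^{d-1}$: its differential at $p_0$, as a linear map from the tangent space of $\mathcal S^{d-1}$ at $p_0$ to $\mathbb{R}^T$, is injective.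
   Context: $\mathcal S^{d-1}$ is the unit sphere in $\mathbb{R}^d$, viewed as a smooth manifold. In the constant step-size setting $\eta>0$; in the decreasing setting $\eta,s$ are positive integers. *)

From HB Require Import structures.
From mathcomp Require Import all_boot all_order all_algebra.
From mathcomp Require Import all_classical all_reals all_analysis.
Set Implicit Arguments. Unset Strict Implicit. Unset Printing Implicit Defensive.
Import Order.TTheory GRing.Theory Num.Theory.
Import numFieldNormedType.Exports.
Local Open Scope ring_scope.

(* Euclidean (l2) norm of a column vector; MathComp-Analysis' matrix norm is
   the sup norm, so we define the Euclidean one explicitly. *)
Definition enorm (R : realType) (d : nat) (x : 'cV[R]_d) : R :=
  Num.sqrt (\sum_(i < d) x i 0 ^+ 2).

Definition dotv (R : realType) (d : nat) (u v : 'cV[R]_d) : R := (u^T *m v) 0 0.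

Definition step_size_rule (R : realType) (eta : nat -> R) : Prop :=
  (exists e : R, 0 < e /\ forall t, eta t = e)
  \/ (exists e s : nat, (0 < e)%N /\ (0 < s)%N /\
        forall t, eta t = e%:R / (t + s)%:R).

(* the sequence q_0, ..., q_{T-1}, extended by 0 outside (never used) *)
Definition qnat (R : realType) (d T : nat) (q : 'I_T -> 'cV[R]_d) (t : nat)
  : 'cV[R]_d := if insub t is Some i then q i else 0.

Fixpoint Phi (R : realType) (d T : nat) (eta : nat -> R)
  (q : 'I_T -> 'cV[R]_d) (t : nat) : 'M[R]_d :=
  match t with
  | 0 => 1%:M
  | t'.+1 => (1%:M + eta t' *: (qnat q t' *m (qnat q t')^T)) *m Phi eta q t'
  end.

(* F_T(p) = ( q_t^T Phi_t p / ||Phi_t p|| )_{t < T}, defined on all of R^d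
   (the sphere map is its restriction). *)
Definition FT (R : realType) (d T : nat) (eta : nat -> R)
  (q : 'I_T -> 'cV[R]_d) (p : 'cV[R]_d) : 'rV[R]_T :=
  \row_(i < T) (dotv (q i) (Phi eta q i *m p) / enorm (Phi eta q i *m p)).

Definition tangent (R : realType) (d : nat) (p v : 'cV[R]_d) : Prop :=
  dotv p v = 0.

From HB Require Import structures.
From mathcomp Require Import all_boot all_order all_algebra.
From mathcomp Require Import all_classical all_reals all_analysis.
From mathcomp Require Import ring.
Import Order.TTheory GRing.Theory Num.Theory.
Import numFieldNormedType.Exports.
Local Open Scope ring_scope.
Set Implicit Arguments. Unset Strict Implicit.

(* Let v be tangent at p with dF_T(p) v = 0; we show q_t . v = 0 by strong
   induction on t.  If q_s . v = 0 for all s < t, each factor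
   I + eta_s q_s q_s^T of Phi_t fixes v, and so does Phi_t^T since the factors
   are symmetric.  Hence Phi_t v = v and Phi_t p . Phi_t v = p . v = 0: the
   radial term of the derivative of x |-> q_t . Phi_t x / |Phi_t x| vanishes,
   leaving q_t . v / |Phi_t p| = 0.  As the q_t span R^d, v = 0. *)

Section LinearMxDifferentiation.
Variables (R : realType) (m n : nat) (W : normedModType R).
Variables (f : 'M[R]_(m, n) -> W) (f_linear : linear f).

Let fL : {linear 'M[R]_(m, n) -> W} :=
  HB.pack f (GRing.isLinear.Build _ _ _ _ _ f_linear).

Lemma linear_mx_differentiable p : differentiable f p.
Proof.
have -> : f = \sum_(i < m) \sum_(j < n)
                (fun x : 'M[R]_(m, n) => x i j *: f (delta_mx i j)).
  apply/funext => x; rewrite {1}(matrix_sum_delta x) !fct_sumE.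
  rewrite [f _](linear_sum fL); apply: eq_bigr => i _.
  rewrite fct_sumE linear_sum; apply: eq_bigr => j _.
  exact: linearZ.
apply: differentiable_sum => i; apply: differentiable_sum => j.
exact/differentiableZl/differentiable_coord.
Qed.

Lemma derive_linear_mx p v : 'D_v f p = f v.
Proof.
rewrite deriveE; last exact: linear_mx_differentiable.
have -> : f = fL by [].
rewrite diff_lin // => x.
exact/differentiable_continuous/linear_mx_differentiable.
Qed.

End LinearMxDifferentiation.

Section MatrixValuedDifferentiation.
Variables (R : realType) (V : normedModType R) (m n : nat).
Variables (F : V -> 'M[R]_(m, n)) (p : V).

Lemma differentiable_mx :
  (forall i j, differentiable (fun x => F x i j) p) -> differentiable F p.
Proof.
move=> dFij.
have -> : F = \sum_(i < m) \sum_(j < n) (fun x => F x i j *: delta_mx i j).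
  apply/funext => x; rewrite {1}(matrix_sum_delta (F x)) fct_sumE.
  by apply: eq_bigr => i _; rewrite fct_sumE.
apply: differentiable_sum => i; apply: differentiable_sum => j.
exact: differentiableZl.
Qed.

Lemma derive_coord v i j :
  differentiable F p -> 'D_v (fun x => F x i j) p = 'd F p v i j.
Proof.
by move=> dF; rewrite -deriveE // derive_mx ?mxE //; exact: diff_derivable.
Qed.

End MatrixValuedDifferentiation.

Section EuclideanInnerProduct.
Variables (R : realType) (d : nat).
Implicit Types (u v w : 'cV[R]_d) (A : 'M[R]_d).

Lemma dotvC u v : dotv u v = dotv v u.
Proof. by rewrite /dotv !mxE; apply: eq_bigr => k _; rewrite !mxE mulrC. Qed.

Lemma dotvDr u v w : dotv u (v + w) = dotv u v + dotv u w.
Proof. by rewrite /dotv mulmxDr mxE. Qed.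

Lemma dotvZr u a v : dotv u (a *: v) = a * dotv u v.
Proof. by rewrite /dotv -scalemxAr mxE. Qed.

Lemma dotv0r u : dotv u 0 = 0.
Proof. by rewrite /dotv mulmx0 mxE. Qed.

Lemma dotv_mulmxl A u v : dotv (A *m u) v = dotv u (A^T *m v).
Proof. by rewrite /dotv trmx_mul mulmxA. Qed.

Lemma dotvvE u : dotv u u = \sum_(i < d) u i 0 ^+ 2.
Proof. by rewrite /dotv mxE; apply: eq_bigr => k _; rewrite mxE expr2. Qed.

Lemma dotvv_ge0 u : 0 <= dotv u u.
Proof. by rewrite dotvvE; apply: sumr_ge0 => i _; exact: sqr_ge0. Qed.

Lemma dotvv_eq0 u : (dotv u u == 0) = (u == 0).
Proof.
apply/eqP/eqP => [|->]; last exact: dotv0r.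
rewrite dotvvE => /psumr_eq0P u0; apply/matrixP => i j; rewrite (ord1 j) mxE.
by apply/eqP; rewrite -sqrf_eq0; apply/eqP/u0 => // k _; exact: sqr_ge0.
Qed.

Lemma enormE u : enorm u = Num.sqrt (dotv u u).
Proof. by rewrite dotvvE. Qed.

Lemma enorm_eq0 u : (enorm u == 0) = (u == 0).
Proof. by rewrite enormE sqrtr_eq0 le_eqVlt ltNge dotvv_ge0 orbF dotvv_eq0. Qed.

End EuclideanInnerProduct.

Section NormalizedProjection.
Variables (R : realType) (d : nat) (M : 'M[R]_d) (u : 'cV[R]_d).
Implicit Types (p v x : 'cV[R]_d).

Lemma coord_mulmx_linear j : linear (fun x => (M *m x) j 0).
Proof. by move=> a x y; rewrite mulmxDr -scalemxAr !mxE. Qed.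

Lemma dotv_mulmx_linear : linear (fun x => dotv u (M *m x)).
Proof. by move=> a x y; rewrite mulmxDr -scalemxAr dotvDr dotvZr. Qed.

Lemma sqnorm_mulmxE :
  (fun x => dotv (M *m x) (M *m x)) =
  \sum_(j < d) ((fun x => (M *m x) j 0) * (fun x => (M *m x) j 0)).
Proof.
by apply/funext => x; rewrite dotvvE fct_sumE; apply: eq_bigr => j _.
Qed.

Lemma differentiable_sqnorm_mulmx p :
  differentiable (fun x => dotv (M *m x) (M *m x)) p.
Proof.
rewrite sqnorm_mulmxE; apply: differentiable_sum => j.
by apply: differentiableM; exact/linear_mx_differentiable/coord_mulmx_linear.
Qed.

Lemma derive_sqnorm_mulmx p v :
  'D_v (fun x => dotv (M *m x) (M *m x)) p = 2 * dotv (M *m p) (M *m v).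
Proof.
have coord_derivable j : derivable (fun x => (M *m x) j 0) p v.
  exact/diff_derivable/linear_mx_differentiable/coord_mulmx_linear.
rewrite sqnorm_mulmxE derive_sum => [|j]; last first.
  by apply/diff_derivable/differentiableM;
    exact/linear_mx_differentiable/coord_mulmx_linear.
rewrite /dotv mxE mulr_sumr; apply: eq_bigr => j _.
rewrite deriveM // !derive_linear_mx; last exact: coord_mulmx_linear.
by rewrite !mxE /GRing.scale /= -mulr2n mulr_natl mulrC.
Qed.

Lemma enorm_mulmxE :
  (fun x => enorm (M *m x)) = Num.sqrt \o (fun x => dotv (M *m x) (M *m x)).
Proof. by apply/funext => x; rewrite /= enormE. Qed.

Section AwayFromKernel.
Variables (p : 'cV[R]_d) (Mp_neq0 : M *m p != 0).

Let sqnorm_gt0 : 0 < dotv (M *m p) (M *m p).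
Proof. by rewrite lt_def dotvv_eq0 Mp_neq0 dotvv_ge0. Qed.

Let enorm_neq0 : enorm (M *m p) != 0.
Proof. by rewrite enorm_eq0. Qed.

Let sqrt_differentiable : differentiable Num.sqrt (dotv (M *m p) (M *m p)).
Proof. by apply/derivable1_diffP; have [] := is_derive1_sqrt sqnorm_gt0. Qed.

Lemma differentiable_enorm_mulmx : differentiable (fun x => enorm (M *m x)) p.
Proof.
rewrite enorm_mulmxE; apply: differentiable_comp => //.
exact: differentiable_sqnorm_mulmx.
Qed.

Lemma derive_enorm_mulmx v :
  'D_v (fun x => enorm (M *m x)) p = dotv (M *m p) (M *m v) / enorm (M *m p).
Proof.
rewrite deriveE; last exact: differentiable_enorm_mulmx.
rewrite enorm_mulmxE diff_comp; last 2 first.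
- exact: differentiable_sqnorm_mulmx.
- exact: sqrt_differentiable.
rewrite /= -[X in 'd _ _ X]deriveE; last exact: differentiable_sqnorm_mulmx.
rewrite deriv1E; last exact/derivable1_diffP/sqrt_differentiable.
rewrite derive_sqnorm_mulmx /= derive1E derive_sqrt // -enormE.
by rewrite /GRing.scale /=; field.
Qed.

Lemma differentiable_normalized_dotv :
  differentiable (fun x => dotv u (M *m x) / enorm (M *m x)) p.
Proof.
apply: differentiableM; first exact/linear_mx_differentiable/dotv_mulmx_linear.
exact: differentiableV differentiable_enorm_mulmx enorm_neq0.
Qed.

Lemma derive_normalized_dotv v :
  'D_v (fun x => dotv u (M *m x) / enorm (M *m x)) p =
  dotv u (M *m v) / enorm (M *m p)
  - dotv u (M *m p) * dotv (M *m p) (M *m v) / enorm (M *m p) ^+ 3.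
Proof.
have enorm_derivable : derivable (fun x => enorm (M *m x)) p v.
  exact/diff_derivable/differentiable_enorm_mulmx.
rewrite deriveM; last 2 first.
- exact/diff_derivable/linear_mx_differentiable/dotv_mulmx_linear.
- exact: derivableV.
rewrite deriveV // derive_enorm_mulmx.
rewrite derive_linear_mx; last exact: dotv_mulmx_linear.
by rewrite /GRing.scale /=; field.
Qed.

End AwayFromKernel.
End NormalizedProjection.

Section RankOneUpdate.
Variables (R : realType) (d : nat).
Implicit Types (v w y : 'cV[R]_d).

Definition rank1_update (e : R) w : 'M[R]_d := 1%:M + e *: (w *m w^T).

Lemma tr_rank1_update e w : (rank1_update e w)^T = rank1_update e w.
Proof.
by rewrite /rank1_update linearD /= tr_scalar_mx linearZ /= trmx_mul trmxK.
Qed.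

Lemma rank1_updateM e w y :
  rank1_update e w *m y = y + (e * dotv w y) *: w.
Proof.
rewrite /rank1_update mulmxDl mul1mx -scalemxAl -mulmxA.
by rewrite [w^T *m y]mx11_scalar mul_mx_scalar scalerA.
Qed.

Lemma rank1_update_fix e w v : dotv w v = 0 -> rank1_update e w *m v = v.
Proof. by move=> wv; rewrite rank1_updateM wv mulr0 scale0r addr0. Qed.

Lemma mulmx_rank1_update_eq0 e w y :
  0 <= e -> (rank1_update e w *m y == 0) = (y == 0).
Proof.
move=> e_ge0; apply/idP/idP => [|/eqP->]; last by rewrite mulmx0.
move=> /eqP Ay0; rewrite -dotvv_eq0 eq_le dotvv_ge0 andbT.
have : dotv y (rank1_update e w *m y) = 0 by rewrite Ay0 dotv0r.
rewrite rank1_updateM dotvDr dotvZr (dotvC y w) -mulrA -expr2 => <-.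
by rewrite lerDl mulr_ge0 ?sqr_ge0.
Qed.

End RankOneUpdate.

Lemma step_size_rule_ge0 (R : realType) (eta : nat -> R) :
  step_size_rule eta -> forall t, 0 <= eta t.
Proof.
case=> [[e [e_gt0 etaE]]|[e [s [_ [_ etaE]]]]] t; rewrite etaE.
  exact: ltW.
by rewrite divr_ge0.
Qed.

Section Dynamics.
Variables (R : realType) (d T : nat) (q : 'I_T -> 'cV[R]_d) (eta : nat -> R).
Hypothesis eta_ge0 : forall t, 0 <= eta t.

Lemma qnatE (i : 'I_T) : qnat q i = q i.
Proof. by rewrite /qnat valK. Qed.

Lemma PhiS t : Phi eta q t.+1 = rank1_update (eta t) (qnat q t) *m Phi eta q t.
Proof. by []. Qed.

Lemma mulmx_Phi_eq0 t (p : 'cV[R]_d) : (Phi eta q t *m p == 0) = (p == 0).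
Proof.
elim: t => [|t IHt]; first by rewrite /= mul1mx.
by rewrite PhiS -mulmxA mulmx_rank1_update_eq0.
Qed.

Lemma Phi_fix t (v : 'cV[R]_d) :
  (forall s, (s < t)%N -> dotv (qnat q s) v = 0) ->
  Phi eta q t *m v = v /\ (Phi eta q t)^T *m v = v.
Proof.
elim: t => [|t IHt] qv; first by rewrite trmx1 !mul1mx.
have [Phi_v PhiT_v] := IHt (fun s lt_st => qv s (ltnW lt_st)).
have A_v := rank1_update_fix (eta t) (qv t (ltnSn t)).
by rewrite PhiS trmx_mul tr_rank1_update -!mulmxA Phi_v A_v PhiT_v.
Qed.

Lemma FT_coordE (x : 'cV[R]_d) (i : 'I_T) :
  FT eta q x 0 i = dotv (q i) (Phi eta q i *m x) / enorm (Phi eta q i *m x).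
Proof. by rewrite mxE. Qed.

Lemma differentiable_FT p : p != 0 -> differentiable (FT eta q) p.
Proof.
move=> p_neq0; apply: differentiable_mx => i j; rewrite (ord1 i).
under eq_fun do rewrite FT_coordE.
by apply: differentiable_normalized_dotv; rewrite mulmx_Phi_eq0.
Qed.

Lemma dFT_eq0_orthogonal p v : p != 0 -> dotv p v = 0 ->
  'd (FT eta q) p v = 0 -> forall t, (t < T)%N -> dotv (qnat q t) v = 0.
Proof.
move=> p_neq0 pv dFv; elim/ltn_ind => t IHt lt_tT.
have [Phi_v PhiT_v] : Phi eta q t *m v = v /\ (Phi eta q t)^T *m v = v.
  by apply: Phi_fix => s lt_st; apply: IHt (ltn_trans lt_st lt_tT).
pose i := Ordinal lt_tT; rewrite -[t]/(val i) qnatE.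
have Phi_p_neq0 : Phi eta q i *m p != 0 by rewrite mulmx_Phi_eq0.
have orth : dotv (Phi eta q i *m p) (Phi eta q i *m v) = 0.
  by rewrite Phi_v dotv_mulmxl PhiT_v.
have := derive_coord v 0 i (differentiable_FT p_neq0).
under eq_fun do rewrite FT_coordE.
rewrite dFv mxE derive_normalized_dotv // orth mulr0 mul0r subr0 Phi_v => /eqP.
by rewrite mulf_eq0 invr_eq0 enorm_eq0 (negbTE Phi_p_neq0) orbF => /eqP.
Qed.

End Dynamics.

Theorem proposition7 (R : realType) (d T : nat) (q : 'I_T -> 'cV[R]_d)
  (eta : nat -> R) :
  (forall i, enorm (q i) = 1) ->
  row_full (\matrix_(i < T) (q i)^T) ->
  step_size_rule eta ->
  forall p0 : 'cV[R]_d, enorm p0 = 1 ->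
    differentiable (FT eta q) p0 /\
    (forall v : 'cV[R]_d, tangent p0 v -> 'd (FT eta q) p0 v = 0 -> v = 0).
Proof.
move=> _ q_full /step_size_rule_ge0 eta_ge0 p0 p0_unit.
have p0_neq0 : p0 != 0 by rewrite -enorm_eq0 p0_unit oner_neq0.
split=> [|v p0v dFv]; first exact: differentiable_FT.
apply: (row_full_inj q_full); rewrite mulmx0; apply/matrixP => i j.
rewrite (ord1 j) [RHS]mxE.
rewrite -(dFT_eq0_orthogonal eta_ge0 p0_neq0 p0v dFv (ltn_ord i)) qnatE.
by rewrite /dotv !mxE; apply: eq_bigr => k _; rewrite !mxE.
Qed.
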